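(* Every double extended meta-interpreter $D$ is sound: for every definite program $P$, every atomic query $Q_0\in B^E_P$ and all terms $s_1,\dots,s_{n}$, if $\mathit{solve}(t_0,t_1,\dots,t_{n})$ is a computed answer for $\mathit{solve}(Q_0,s_1,\dots,s_{n})$ with respect to $D\cup\mathit{ce}^D(P)$, then $t_0$ is a correct answer for $Q_0$ with respect to $P$.
   Context: Logic programs are definite; $B^E_P$ is the set of atoms of the language of $P$ modulo variance; computed answers are w.r.t. SLD-resolution with the leftmost selection rule. A double extended meta-interpreter is a definite program consisting of three clauses of the form $\mathit{solve}(\mathit{true},t_{11},\dots,t_{1n})\leftarrow C_{11},\dots,C_{1m_1}.$ $\mathit{solve}((A,B),t_{21},\dots,t_{2n})\leftarrow D_{11},\dots,D_{1k_1},\mathit{solve}(A,t_{31},\dots,t_{3n}),D_{21},\dots,D_{2k_2},\mathit{solve}(B,t_{41},\dots,t_{4n}),C_{21},\dots,C_{2m_2}.$ $\mathit{solve}(A,t_{51},\dots,t_{5n})\leftarrow D_{31},\dots,D_{3k_3},\mathit{clause}(A,B,s_1,\dots,s_k),D_{41},\dots,D_{4k_4},\mathit{solve}(B,t_{61},\dots,t_{6n}),C_{31},\dots,C_{3m_3}.$ where $A,B$ are variables (the meta-variables), the $t_{ij},s_j$ are terms, together with clauses defining the other predicates occurring in the atoms $C_{kl},D_{pq}$, none of which contain $\mathit{solve}$ or $\mathit{clause}$. For a definite program $P$, a clause body $B_1,\dots,B_m$ is encoded as the term $(B_1,(B_2,\dots,B_m))$ using the binary functor $,/2$ and an empty body as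 $\mathit{true}$; $\mathit{ce}^D(P)$ is a set of facts $\mathit{clause}(H,B,s_1,\dots,s_k)$ such that for every clause $H\leftarrow B$ of $P$ there is a unique fact of the form $\mathit{clause}(H,B,\dots)$ in $\mathit{ce}^D(P)$ and every fact $\mathit{clause}(H,B,\dots)$ in $\mathit{ce}^D(P)$ comes from a clause $H\leftarrow B$ of $P$. The symbols $,/2$, $\mathit{clause}$, $\mathit{solve}$ do not occur in the language of $P$. *)

From Stdlib Require Import List.
Import ListNotations.

Inductive term : Type :=
| Var : nat -> term
| Fn : nat -> list term -> term.

Definition atom : Type := (nat * list term)%type.

Record clause : Type := mkClause { chead : atom; cbody : list atom }.

Definition program : Type := list clause.

(** Atoms of the object program are represented as terms at the meta level. *)
Definition term_of_atom (a : atom) : term := Fn (fst a) (snd a).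

Definition sym_solve : nat := 0.
Definition sym_clause : nat := 1.
Definition sym_comma : nat := 2.
Definition sym_true : nat := 3.

Fixpoint enc_body (bs : list atom) : term :=
  match bs with
  | [] => Fn sym_true []
  | [b] => term_of_atom b
  | b :: bs' => Fn sym_comma [term_of_atom b; enc_body bs']
  end.

Fixpoint term_vars (t : term) : list nat :=
  match t with
  | Var x => [x]
  | Fn _ ts => flat_map term_vars ts
  end.

Definition atom_vars (a : atom) : list nat := flat_map term_vars (snd a).

Definition clause_vars (c : clause) : list nat :=
  atom_vars (chead c) ++ flat_map atom_vars (cbody c).

Fixpoint term_funs (t : term) : list nat :=
  match t with
  | Var _ => []
  | Fn f ts => f :: flat_map term_funs ts
  end.

Definition atom_funs (a : atom) : list nat := flat_map term_funs (snd a).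

Definition clause_atoms (c : clause) : list atom := chead c :: cbody c.

Definition prog_preds (P : program) : list nat :=
  flat_map (fun c => map fst (clause_atoms c)) P.
Definition prog_funs (P : program) : list nat :=
  flat_map (fun c => flat_map atom_funs (clause_atoms c)) P.

(** Q is an atom of the language of P (B^E_P; variance is irrelevant here). *)
Definition in_lang (P : program) (Q : atom) : Prop :=
  In (fst Q) (prog_preds P) /\ (forall f, In f (atom_funs Q) -> In f (prog_funs P)).

(** The reserved symbols ,/2, clause, solve (and the constant true used for
    the empty body) do not occur in the language of P. *)
Definition reserved (f : nat) : Prop :=
  f = sym_solve \/ f = sym_clause \/ f = sym_comma \/ f = sym_true.

Definition object_program (P : program) : Prop :=
  (forall f, In f (prog_preds P) -> ~ reserved f) /\
  (forall f, In f (prog_funs P) -> ~ reserved f).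

Definition subst : Type := nat -> term.

Fixpoint tsubst (s : subst) (t : term) : term :=
  match t with
  | Var x => s x
  | Fn f ts => Fn f (map (tsubst s) ts)
  end.

Definition asubst (s : subst) (a : atom) : atom := (fst a, map (tsubst s) (snd a)).

(** composition: first [s1], then [s2] *)
Definition compose (s1 s2 : subst) : subst := fun x => tsubst s2 (s1 x).

Definition unifier (s : subst) (a b : atom) : Prop := asubst s a = asubst s b.

Definition is_mgu (th : subst) (a b : atom) : Prop :=
  unifier th a b /\
  forall s, unifier s a b -> exists g, forall x, s x = tsubst g (th x).

Definition rename_clause (r : nat -> nat) (c : clause) : clause :=
  let rs := fun x => Var (r x) in
  mkClause (asubst rs (chead c)) (map (asubst rs) (cbody c)).

Definition injective (r : nat -> nat) : Prop := forall x y, r x = r y -> x = y.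

(** * SLD-resolution with the leftmost selection rule.
    [sld P V G th]: there is a successful SLD-derivation of P ∪ {<- G} whose
    composed mgus are [th]; [V] collects the variables already used in the
    derivation, so that program clauses are renamed apart (variants). *)
Inductive sld (P : program) : list nat -> list atom -> subst -> Prop :=
| sld_empty : forall V, sld P V [] Var
| sld_step : forall V A G c c' r th sg,
    In c P ->
    injective r ->
    c' = rename_clause r c ->
    (forall x, In x (clause_vars c') -> ~ In x V) ->
    is_mgu th A (chead c') ->
    sld P (V ++ clause_vars c' ++
             flat_map (fun x => term_vars (th x)) (V ++ clause_vars c'))
        (map (asubst th) (cbody c' ++ G)) sg ->
    sld P V (A :: G) (compose th sg).

Definition computed_answer (P : program) (Q A : atom) : Prop :=
  exists th, sld P (atom_vars Q) [Q] th /\ A = asubst th Q.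

Section Sem.
Variables (D : Type) (F : nat -> list D -> D) (R : nat -> list D -> Prop).

Fixpoint teval (v : nat -> D) (t : term) : D :=
  match t with
  | Var x => v x
  | Fn f ts => F f (map (teval v) ts)
  end.

Definition holds (v : nat -> D) (a : atom) : Prop := R (fst a) (map (teval v) (snd a)).

Definition is_model (P : program) : Prop :=
  forall c, In c P -> forall v : nat -> D,
    (forall b, In b (cbody c) -> holds v b) -> holds v (chead c).
End Sem.

Definition entails (P : program) (A : atom) : Prop :=
  forall (D : Type) (F : nat -> list D -> D) (R : nat -> list D -> Prop),
    is_model D F R P -> forall v, holds D F R v A.

Definition correct_answer (P : program) (Q : atom) (t : term) : Prop :=
  exists th, t = term_of_atom (asubst th Q) /\ entails P (asubst th Q).

Record dem : Type := mkDem {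
  dn : nat;  dk : nat;
  vA : nat;  vB : nat;
  t1 : list term; t2 : list term; t3 : list term;
  t4 : list term; t5 : list term; t6 : list term;
  sk : list term;
  C1 : list atom; C2 : list atom; C3 : list atom;
  D1 : list atom; D2 : list atom; D3 : list atom; D4 : list atom;
  aux : program                    (* clauses defining the other predicates *)
}.

Definition not_meta_pred (a : atom) : Prop :=
  fst a <> sym_solve /\ fst a <> sym_clause.

Definition dem_wf (M : dem) : Prop :=
  vA M <> vB M /\
  length (t1 M) = dn M /\ length (t2 M) = dn M /\ length (t3 M) = dn M /\
  length (t4 M) = dn M /\ length (t5 M) = dn M /\ length (t6 M) = dn M /\
  length (sk M) = dk M /\
  (forall a, In a (C1 M ++ C2 M ++ C3 M ++ D1 M ++ D2 M ++ D3 M ++ D4 M) ->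
     not_meta_pred a) /\
  (forall c, In c (aux M) -> forall a, In a (clause_atoms c) -> not_meta_pred a).

Definition dem_clause1 (M : dem) : clause :=
  mkClause (sym_solve, Fn sym_true [] :: t1 M) (C1 M).

Definition dem_clause2 (M : dem) : clause :=
  mkClause (sym_solve, Fn sym_comma [Var (vA M); Var (vB M)] :: t2 M)
    (D1 M ++ (sym_solve, Var (vA M) :: t3 M) :: D2 M ++
          (sym_solve, Var (vB M) :: t4 M) :: C2 M).

Definition dem_clause3 (M : dem) : clause :=
  mkClause (sym_solve, Var (vA M) :: t5 M)
    (D3 M ++ (sym_clause, Var (vA M) :: Var (vB M) :: sk M) :: D4 M ++
          (sym_solve, Var (vB M) :: t6 M) :: C3 M).

Definition dem_prog (M : dem) : program :=
  dem_clause1 M :: dem_clause2 M :: dem_clause3 M :: aux M.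

Definition fact_of (k : nat) (f c : clause) : Prop :=
  cbody f = [] /\
  exists ss, length ss = k /\
    chead f = (sym_clause, term_of_atom (chead c) :: enc_body (cbody c) :: ss).

Definition is_ce (k : nat) (P : program) (ce : program) : Prop :=
  (forall c, In c P -> exists f, In f ce /\ fact_of k f c /\
       (forall f', In f' ce -> fact_of k f' c -> f' = f)) /\
  (forall f, In f ce -> exists c, In c P /\ fact_of k f c).

(* The meta-interpreter is read in a term model over the Herbrand universe in
   which [solve(t, ...)] means "t is a conjunction, built with [,/2] and
   [true], of atoms that are logical consequences of P", [clause(h, b, ...)]
   means "(h, b) is an instance of the head and encoded body of a clause of P",
   and every other predicate is true.  All clauses of D and of ce^D(P) are true
   in this model, the third one because an instance of a clause of P whose body
   atoms follow from P has a head that follows from P.  Since SLD-resolution is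
   sound, a computed answer solve(t0, ...) is true in the model, so t0 encodes
   an instance of Q0 that follows from P. *)
From Stdlib Require Import List Arith.
Import ListNotations.

Fixpoint term_ind_nested (Pr : term -> Prop) (HVar : forall x, Pr (Var x))
  (HFn : forall f ts, Forall Pr ts -> Pr (Fn f ts)) (t : term) : Pr t :=
  match t with
  | Var x => HVar x
  | Fn f ts =>
      HFn f ts ((fix go l := match l return Forall Pr l with
                             | [] => Forall_nil _
                             | u :: l' => Forall_cons _ (term_ind_nested Pr HVar HFn u) (go l')
                             end) ts)
  end.

Lemma tsubst_compose s1 s2 t : tsubst (compose s1 s2) t = tsubst s2 (tsubst s1 t).
Proof.
  induction t as [x | f ts IH] using term_ind_nested; simpl; auto.
  f_equal. rewrite map_map. apply map_ext_Forall. exact IH.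
Qed.

Lemma asubst_compose s1 s2 a : asubst (compose s1 s2) a = asubst s2 (asubst s1 a).
Proof.
  unfold asubst; simpl. f_equal. rewrite map_map. apply map_ext. apply tsubst_compose.
Qed.

Lemma teval_tsubst (D : Type) (F : nat -> list D -> D) v s t :
  teval D F v (tsubst s t) = teval D F (fun x => teval D F v (s x)) t.
Proof.
  induction t as [x | f ts IH] using term_ind_nested; simpl; auto.
  f_equal. rewrite map_map. apply map_ext_Forall. exact IH.
Qed.

Lemma holds_asubst D F R v s a :
  holds D F R v (asubst s a) = holds D F R (fun x => teval D F v (s x)) a.
Proof.
  unfold holds, asubst; simpl. f_equal. rewrite map_map. apply map_ext.
  intro t. apply teval_tsubst.
Qed.

Lemma teval_Fn_Var t : teval term Fn Var t = t.
Proof.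
  induction t as [x | f ts IH] using term_ind_nested; simpl; auto.
  f_equal. rewrite <- (map_id ts) at 2. apply map_ext_Forall. exact IH.
Qed.

Lemma model_clause_instance D F R P c s v :
  is_model D F R P -> In c P ->
  (forall b, In b (cbody c) -> holds D F R v (asubst s b)) ->
  holds D F R v (asubst s (chead c)).
Proof.
  intros Hm Hc Hbody. rewrite holds_asubst.
  apply (Hm c Hc). intros b Hb. rewrite <- holds_asubst. apply Hbody, Hb.
Qed.

Lemma entails_clause_instance P c s :
  In c P -> (forall b, In b (cbody c) -> entails P (asubst s b)) ->
  entails P (asubst s (chead c)).
Proof.
  intros Hc Hbody D F R Hm v.
  apply (model_clause_instance D F R P c s v Hm Hc). intros b Hb. apply Hbody; assumption.
Qed.

Lemma is_model_app D F R P1 P2 :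
  is_model D F R P1 -> is_model D F R P2 -> is_model D F R (P1 ++ P2).
Proof.
  intros H1 H2 c Hc. apply in_app_or in Hc as [Hc | Hc]; [apply H1 | apply H2]; exact Hc.
Qed.

Lemma sld_sound P V G th : sld P V G th ->
  forall D F R, is_model D F R P ->
  forall v a, In a G -> holds D F R v (asubst th a).
Proof.
  induction 1 as [V | V A G c c' r th sg Hc _ Hc' _ [Hunif _] _ IH];
    intros D F R Hm v a Ha; [destruct Ha |].
  rewrite asubst_compose.
  destruct Ha as [<- | Ha].
  - unfold unifier in Hunif. rewrite Hunif. subst c'. simpl.
    set (rs := fun x => Var (r x)).
    rewrite <- !asubst_compose.
    apply (model_clause_instance D F R P c _ v Hm Hc). intros b Hb.
    rewrite !asubst_compose.
    apply (IH D F R Hm v), in_map, in_or_app. left. apply in_map, Hb.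
  - apply (IH D F R Hm v), in_map, in_or_app. right. exact Ha.
Qed.

Lemma computed_answer_sound P Q A : computed_answer P Q A -> entails P A.
Proof.
  intros [th [Hsld ->]] D F R Hm v.
  exact (sld_sound P _ _ th Hsld D F R Hm v Q (or_introl eq_refl)).
Qed.

Section MetaModel.
Variable P : program.

Inductive solvable : term -> Prop :=
| solvable_true : solvable (Fn sym_true [])
| solvable_conj a b : solvable a -> solvable b -> solvable (Fn sym_comma [a; b])
| solvable_atom A : ~ reserved (fst A) -> entails P A -> solvable (term_of_atom A).

Definition clause_instance (h b : term) : Prop :=
  exists c s, In c P /\ h = tsubst s (term_of_atom (chead c)) /\
              b = tsubst s (enc_body (cbody c)).

Definition meta_rel (q : nat) (xs : list term) : Prop :=
  if q =? sym_solve then match xs with x :: _ => solvable x | [] => False end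
  else if q =? sym_clause then match xs with x :: y :: _ => clause_instance x y | _ => False end
  else True.

Lemma solvable_atom_inv A : ~ reserved (fst A) -> solvable (term_of_atom A) -> entails P A.
Proof.
  destruct A as [p args]. intros Hr Hs. inversion Hs as [Ep | a b _ _ Ep | A' _ HA' Ep]; subst.
  - exfalso. apply Hr. do 3 right. reflexivity.
  - exfalso. apply Hr. do 2 right. left. reflexivity.
  - destruct A'. exact HA'.
Qed.

Lemma solvable_conj_inv a b : solvable (Fn sym_comma [a; b]) -> solvable a /\ solvable b.
Proof.
  intros Hs. inversion Hs as [| a' b' Ha Hb | [p args] Hr _ Ep]; [split; assumption |].
  exfalso. apply Hr. simpl. do 2 right. left. reflexivity.
Qed.

Lemma solvable_enc_body s bs :
  (forall b, In b bs -> ~ reserved (fst b)) ->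
  solvable (tsubst s (enc_body bs)) -> forall b, In b bs -> entails P (asubst s b).
Proof.
  induction bs as [| b bs IH]; intros Hr Hs b0 Hb0; [destruct Hb0 |].
  destruct bs as [| b' bs'].
  - destruct Hb0 as [<- | []].
    apply (solvable_atom_inv (asubst s b)); [apply (Hr b); left; reflexivity | exact Hs].
  - apply solvable_conj_inv in Hs as [Hsb Hsbs].
    destruct Hb0 as [<- | Hb0].
    + apply (solvable_atom_inv (asubst s b)); [apply (Hr b); left; reflexivity | exact Hsb].
    + apply IH; [intros; apply Hr; right; assumption | exact Hsbs | exact Hb0].
Qed.

Lemma ce_meta_model k ce : is_ce k P ce -> is_model term Fn meta_rel ce.
Proof.
  intros [_ Hfacts] f Hf v _. destruct (Hfacts f Hf) as [c [Hc [_ [ss [_ Ehead]]]]].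
  unfold holds. rewrite Ehead. simpl. exists c, v. split; [exact Hc | split; reflexivity].
Qed.

Hypothesis object_P : object_program P.

Lemma clause_atom_not_reserved c a : In c P -> In a (clause_atoms c) -> ~ reserved (fst a).
Proof.
  intros Hc Ha. apply (proj1 object_P). apply in_flat_map. exists c. split; [exact Hc |].
  apply in_map, Ha.
Qed.

Lemma clause_instance_solvable h b : clause_instance h b -> solvable b -> solvable h.
Proof.
  intros [c [s [Hc [-> ->]]]] Hb.
  apply (solvable_atom (asubst s (chead c))).
  - apply (clause_atom_not_reserved c (chead c)); [exact Hc | left; reflexivity].
  - apply entails_clause_instance; [exact Hc |].
    apply solvable_enc_body; [| exact Hb].
    intros a Ha. apply (clause_atom_not_reserved c a); [exact Hc | right; exact Ha].
Qed.

Lemma meta_rel_other q xs : q <> sym_solve -> q <> sym_clause -> meta_rel q xs.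
Proof.
  intros Hs Hc. unfold meta_rel. apply Nat.eqb_neq in Hs, Hc. rewrite Hs, Hc. exact I.
Qed.

Lemma dem_prog_meta_model M :
  dem_wf M -> is_model term Fn meta_rel (dem_prog M).
Proof.
  intros Hwf c Hc v Hbody.
  destruct Hc as [<- | [<- | [<- | Haux]]]; unfold holds; simpl.
  - exact solvable_true.
  - apply solvable_conj;
      [apply (Hbody (sym_solve, Var (vA M) :: t3 M))
      | apply (Hbody (sym_solve, Var (vB M) :: t4 M))];
      simpl; apply in_or_app; right; [left; reflexivity |].
    right. apply in_or_app. right. left. reflexivity.
  - apply (clause_instance_solvable _ (v (vB M))).
    + apply (Hbody (sym_clause, Var (vA M) :: Var (vB M) :: sk M)).
      simpl. apply in_or_app. right. left. reflexivity.
    + apply (Hbody (sym_solve, Var (vB M) :: t6 M)).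
      simpl. apply in_or_app. right. right. apply in_or_app. right. left. reflexivity.
  - destruct Hwf as (_ & _ & _ & _ & _ & _ & _ & _ & _ & Hnot_meta).
    destruct (Hnot_meta c Haux (chead c) (or_introl eq_refl)) as [Hs Hcl].
    apply meta_rel_other; assumption.
Qed.

End MetaModel.

Theorem mainTheorem5 (M : dem) (P : program) (ce : program)
  (Q0 : atom) (ss : list term) (t0 : term) (ts : list term) :
  dem_wf M ->
  object_program P ->
  is_ce (dk M) P ce ->
  in_lang P Q0 ->
  length ss = dn M ->
  computed_answer (dem_prog M ++ ce)
    (sym_solve, term_of_atom Q0 :: ss) (sym_solve, t0 :: ts) ->
  correct_answer P Q0 t0.
Proof.
  intros Hwf Hobj Hce Hlang _ Hca.
  assert (Hmodel : is_model term Fn (meta_rel P) (dem_prog M ++ ce)).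
  { apply is_model_app;
      [exact (dem_prog_meta_model P Hobj M Hwf) | exact (ce_meta_model P (dk M) ce Hce)]. }
  assert (Ht0 : solvable P t0).
  { pose proof (computed_answer_sound _ _ _ Hca term Fn (meta_rel P) Hmodel Var) as Hsolve.
    unfold holds in Hsolve. simpl in Hsolve. rewrite teval_Fn_Var in Hsolve. exact Hsolve. }
  destruct Hca as [th [_ Hans]]. injection Hans as Et0 _.
  exists th. split; [exact Et0 |].
  apply solvable_atom_inv; [apply (proj1 Hobj), (proj1 Hlang) |].
  rewrite Et0 in Ht0. exact Ht0.
Qed.
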